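(* For every $t\ge 0$, every $k\ge 1$ and every collection $\Omega$ of functions, $$\rho_1\bigl(\mathsf{vwl}_k^{(t)}\bigr)=\rho_1\bigl(\mathsf{TL}_{k+1}^{(t)}(\Omega)\bigr).$$
   Context: Fix integers $n\ge 1$ and $\ell\ge 1$. A graph is a triple $G=(V_G,E_G,\mathrm{col}_G)$ with $V_G=[n]=\{1,\dots,n\}$, $E_G$ a set of unordered pairs of distinct vertices (undirected, no loops), and a vertex labelling $\mathrm{col}_G:V_G\to\mathbb R^\ell$; $N_G(v)=\{u:uv\in E_G\}$. Let $\mathcal G=\mathcal G_0$ be the set of all such graphs and, for $s\ge 1$, $\mathcal G_s=\{(G,\mathbf v):G\in\mathcal G,\ \mathbf v\in V_G^s\}$. Tensor language $\mathsf{TL}(\Omega)$: let $\Omega$ be a collection of functions, each of the form $f:\mathbb R^p\to\mathbb R$ for some $p\ge1$ depending on $f$. Expressions are generated by $\varphi::=\mathbf 1_{x=y}\mid \mathbf 1_{x\neq y}\mid E(x,y)\mid P_s(x)\mid \varphi\cdot\varphi\mid \varphi+\varphi\mid a\cdot\varphi\mid f(\varphi_1,\dots,\varphi_p)\mid \sum_x\varphi$, with $x,y$ index variables, $s\in[\ell]$, $a\in\mathbb R$, $f\in\Omega$ of arity $p$. Free variables: $\mathrm{free}(\mathbf 1_{x\,\mathrm{op}\,y})=\mathrm{free}(E(x,y))=\{x,y\}$, $\mathrm{free}(P_s(x))=\{x\}$; for $\varphi_1\cdot\varphi_2$, $\varphi_1+\varphi_2$, $f(\varphi_1,\dots,\varphi_p)$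 the union of the components' free variables; $\mathrm{free}(a\cdot\varphi)=\mathrm{free}(\varphi)$; $\mathrm{free}(\sum_x\varphi)=\mathrm{free}(\varphi)\setminus\{x\}$. Semantics: for a graph $G$ and a valuation $\nu$ mapping variables to $V_G$: $[\![E(x,y)]\!]^\nu_G=1$ if $\nu(x)\nu(y)\in E_G$ and $0$ otherwise; $[\![P_s(x)]\!]^\nu_G=\mathrm{col}_G(\nu(x))_s$; $[\![\mathbf 1_{x\,\mathrm{op}\,y}]\!]^\nu_G=1$ if $\nu(x)\,\mathrm{op}\,\nu(y)$ and $0$ otherwise; $\cdot$, $+$, scalar multiplication and $f$ act on the values of the components; $[\![\sum_x\varphi]\!]^\nu_G=\sum_{v\in V_G}[\![\varphi]\!]^{\nu[x\mapsto v]}_G$. For $\varphi$ with free variables among $x_1,\dots,x_s$ and $\mathbf v\in V_G^s$, $[\![\varphi]\!]^{\mathbf v}_G$ denotes the value under $x_i\mapsto v_i$. Summation depth $\mathrm{sd}$: $0$ for atoms, maximum over the components for $\cdot$, $+$, $f(\dots)$, $\mathrm{sd}(a\cdot\varphi)=\mathrm{sd}(\varphi)$, $\mathrm{sd}(\sum_x\varphi)=\mathrm{sd}(\varphi)+1$. $\mathsf{TL}_k(\Omega)$ is the set of expressions in which only variables from $\{x_1,\dots,x_k\}$ occur (free or bound; variables may be re-bound), and $\mathsf{TL}_k^{(t)}(\Omega)$ its subset of summation depth at most $t$. Separation power: for a set $\mathcal F$ of functions $f:\mathcal G_s\to\mathbb R^{m_f}$, $\rho_s(\mathcal F)=\{((G,\mathbf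 v),(H,\mathbf w))\in\mathcal G_s\times\mathcal G_s: f(G,\mathbf v)=f(H,\mathbf w)\ \forall f\in\mathcal F\}$ (for $s=0$, pairs of graphs), and $\rho_s(f)=\rho_s(\{f\})$. For a set $\mathcal L$ of expressions, $\rho_s(\mathcal L)$ is the set of pairs with $[\![\varphi]\!]^{\mathbf v}_G=[\![\varphi]\!]^{\mathbf w}_H$ for all $\varphi\in\mathcal L$ whose free variables are among $x_1,\dots,x_s$ (for $s=0$: all closed expressions in $\mathcal L$). $k$-dimensional Weisfeiler–Leman ($k\ge1$): for $\mathbf v\in V_G^k$, the atomic type $\mathsf{atp}_k(G,\mathbf v)$ records, for all $1\le i<j\le k$, whether $v_i=v_j$ and whether $v_iv_j\in E_G$, together with $\mathrm{col}_G(v_i)$ for all $i\in[k]$. Set $\mathsf{wl}_k^{(0)}(G,\mathbf v)=\mathsf{atp}_k(G,\mathbf v)$ and $\mathsf{wl}_k^{(t+1)}(G,\mathbf v)=\bigl(\mathsf{wl}_k^{(t)}(G,\mathbf v),\{\!\{(\mathsf{atp}_{k+1}(G,(v_1,\dots,v_k,u)),\mathsf{wl}_k^{(t)}(G,\mathbf v[u/1]),\dots,\mathsf{wl}_k^{(t)}(G,\mathbf v[u/k])):u\in V_G\}\!\}\bigr)$, where $\mathbf v[u/i]$ replaces the $i$-th entry of $\mathbf v$ by $u$ and $\{\!\{\cdot\}\!\}$ denotes a multiset. Labels are compared as formal objects across graphs. $\mathsf{vwl}_k^{(t)}(G,v)=\mathsf{wl}_k^{(t)}(G,(v,\dots,v))$.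 $\rho_1(\mathsf{vwl}_k^{(t)})$ is the set of pairs $((G,v),(H,w))$ with $\mathsf{vwl}_k^{(t)}(G,v)=\mathsf{vwl}_k^{(t)}(H,w)$. *)

From Stdlib Require Import Reals.
From mathcomp Require Import all_boot all_fingroup.

Set Implicit Arguments.
Unset Strict Implicit.
Unset Printing Implicit Defensive.

Record graph (n l : nat) := Graph {
  adj : rel 'I_n;
  adj_sym : symmetric adj;
  adj_irr : irreflexive adj;
  col : 'I_n -> 'I_l -> R
}.

(** Omega is a collection of functions indexed by a type [Om]; the function
    indexed by [o] has arity [ar o] and is [fn o : R^(ar o) -> R].
    Index variables are natural numbers: variable [i] stands for x_i. *)
Inductive expr (l : nat) (Om : Type) (ar : Om -> nat) : Type :=
| EEq  (x y : nat)
| ENeq (x y : nat)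
| EEdge (x y : nat)
| ELab (s : 'I_l) (x : nat)
| EMul (e1 e2 : expr l ar)
| EAdd (e1 e2 : expr l ar)
| EScale (a : R) (e : expr l ar)
| EApp (o : Om) (args : 'I_(ar o) -> expr l ar)
| ESum (x : nat) (e : expr l ar).

Arguments EEq {l Om ar}. Arguments ENeq {l Om ar}. Arguments EEdge {l Om ar}.
Arguments ELab {l Om ar}. Arguments EMul {l Om ar}. Arguments EAdd {l Om ar}.
Arguments EScale {l Om ar}. Arguments EApp {l Om ar}. Arguments ESum {l Om ar}.

Fixpoint is_free l Om (ar : Om -> nat) (x : nat) (e : expr l ar) : Prop :=
  match e with
  | EEq a b | ENeq a b | EEdge a b => x = a \/ x = b
  | ELab _ a => x = a
  | EMul e1 e2 | EAdd e1 e2 => is_free x e1 \/ is_free x e2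
  | EScale _ e1 => is_free x e1
  | EApp o args => exists i, is_free x (args i)
  | ESum y e1 => x <> y /\ is_free x e1
  end.

Fixpoint vars_among l Om (ar : Om -> nat) (k : nat) (e : expr l ar) : Prop :=
  match e with
  | EEq a b | ENeq a b | EEdge a b => (1 <= a <= k) /\ (1 <= b <= k)
  | ELab _ a => 1 <= a <= k
  | EMul e1 e2 | EAdd e1 e2 => vars_among k e1 /\ vars_among k e2
  | EScale _ e1 => vars_among k e1
  | EApp o args => forall i, vars_among k (args i)
  | ESum y e1 => (1 <= y <= k) /\ vars_among k e1
  end.

Fixpoint sd l Om (ar : Om -> nat) (e : expr l ar) : nat :=
  match e with
  | EEq _ _ | ENeq _ _ | EEdge _ _ | ELab _ _ => 0
  | EMul e1 e2 | EAdd e1 e2 => maxn (sd e1) (sd e2)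
  | EScale _ e1 => sd e1
  | EApp o args => \max_(i < ar o) sd (args i)
  | ESum _ e1 => (sd e1).+1
  end.

Definition in_TL l Om (ar : Om -> nat) (k t : nat) (e : expr l ar) : Prop :=
  vars_among k e /\ sd e <= t.

Definition free_among l Om (ar : Om -> nat) (s : nat) (e : expr l ar) : Prop :=
  forall x, is_free x e -> 1 <= x <= s.

Definition upd n (nu : nat -> 'I_n) (x : nat) (v : 'I_n) : nat -> 'I_n :=
  fun y => if y == x then v else nu y.

Fixpoint eval n l Om (ar : Om -> nat) (fn : forall o, ('I_(ar o) -> R) -> R)
    (G : graph n l) (nu : nat -> 'I_n) (e : expr l ar) : R :=
  match e with
  | EEq a b => if nu a == nu b then R1 else R0
  | ENeq a b => if nu a != nu b then R1 else R0
  | EEdge a b => if adj G (nu a) (nu b) then R1 else R0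
  | ELab s a => col G (nu a) s
  | EMul e1 e2 => Rmult (eval fn G nu e1) (eval fn G nu e2)
  | EAdd e1 e2 => Rplus (eval fn G nu e1) (eval fn G nu e2)
  | EScale a e1 => Rmult a (eval fn G nu e1)
  | EApp o args => fn o (fun i => eval fn G nu (args i))
  | ESum x e1 => \big[Rplus/R0]_(v < n) eval fn G (upd nu x v) e1
  end.

(** * k-dimensional Weisfeiler-Leman.
    Tuples in V^m are functions 'I_m -> 'I_n (entry i stands for v_{i+1}). *)

Definition atp n l m (G : graph n l) (v : 'I_m -> 'I_n) :
    {ffun 'I_m * 'I_m -> bool * bool} * {ffun 'I_m -> {ffun 'I_l -> R}} :=
  ([ffun ij : 'I_m * 'I_m =>
      if ij.1 < ij.2 then (v ij.1 == v ij.2, adj G (v ij.1) (v ij.2))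
      else (false, false)],
   [ffun i => [ffun s => col G (v i) s]]).

Definition snoc n k (v : 'I_k -> 'I_n) (u : 'I_n) : 'I_k.+1 -> 'I_n :=
  fun i => if (insub (val i) : option 'I_k) is Some j then v j else u.

Definition repl n k (v : 'I_k -> 'I_n) (i : 'I_k) (u : 'I_n) : 'I_k -> 'I_n :=
  fun j => if j == i then u else v j.

(** [wl_same k t G H v w] holds iff wl_k^{(t)}(G, v) = wl_k^{(t)}(H, w),
    i.e. equality of the WL labels as formal objects: a pair is equal iff its
    components are, and two multisets {{ f u : u in V_G }}, {{ g u : u in V_H }}
    are equal iff some bijection sigma : V_G -> V_H matches equal elements
    (both vertex sets are [n]). *)
Fixpoint wl_same n l (k t : nat) (G H : graph n l) (v w : 'I_k -> 'I_n) : Prop :=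
  match t with
  | 0 => atp G v = atp H w
  | t'.+1 =>
      wl_same t' G H v w /\
      exists sigma : {perm 'I_n}, forall u : 'I_n,
        atp G (snoc v u) = atp H (snoc w (sigma u)) /\
        forall i : 'I_k, wl_same t' G H (repl v i u) (repl w i (sigma u))
  end.

Definition vwl_same n l (k t : nat) (G H : graph n l) (v w : 'I_n) : Prop :=
  @wl_same n l k t G H (fun _ : 'I_k => v) (fun _ : 'I_k => w).

(** The valuation maps every variable to v (resp. w);
    only x_1 can be free, so this is the value under x_1 |-> v. *)
Definition rho1_TL n l Om (ar : Om -> nat) (fn : forall o, ('I_(ar o) -> R) -> R)
    (k t : nat) (G H : graph n l) (v w : 'I_n) : Prop :=
  forall e : expr l ar, in_TL k t e -> free_among 1 e ->
    eval fn G (fun _ => v) e = eval fn H (fun _ => w) e.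

(* Forward inclusion: by induction on an expression of TL_{k+1} of summation depth
   at most s, its value under a valuation of x_1, ..., x_{k+1} depends only on the
   atomic type of the (k+1)-tuple of values and on the depth-s WL colours of the
   k-tuples obtained by dropping one entry.  A summation over x_j is reindexed along
   the bijection witnessing the equality of WL multisets of the tuple without x_j.

   Converse: by induction on t, the indicator of a WL colour class of k-tuples is
   expressible in TL_{k+1}^{(t)}, with its k arguments placed on any k of the k+1
   variables, so a variable is always left for a summation.  Equality of multisets
   is equality of the number of members of each class; that number is a sum of
   indicators, and a quantity with finitely many values is compared with a constant
   by polynomial interpolation.  Placing all arguments on x_1 yields the theorem. *)

From Stdlib Require Import Reals.
From mathcomp Require Import all_boot all_fingroup.
From Stdlib Require Import Lra.
From mathcomp Require Import boolp.
From HB Require Import structures.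

Set Implicit Arguments.
Unset Strict Implicit.
Unset Printing Implicit Defensive.

HB.instance Definition _ := Monoid.isComLaw.Build R R0 Rplus
  (fun x y z => esym (Rplus_assoc x y z)) Rplus_comm Rplus_0_l.

Section AtomicTypes.
Variables (n l : nat) (X Y : graph n l).

Definition same_atp m (a b : 'I_m -> 'I_n) : Prop :=
  [/\ forall i j, (a i == a j) = (b i == b j),
      forall i j, adj X (a i) (a j) = adj Y (b i) (b j) &
      forall i s, col X (a i) s = col Y (b i) s].

Lemma atp_eqP m (a b : 'I_m -> 'I_n) : atp X a = atp Y b <-> same_atp a b.
Proof.
split=> [[/ffunP Eij /ffunP Ecol] | [Eeq Eadj Ecol]].
- have Elt (i j : 'I_m) : i < j ->
      (a i == a j) = (b i == b j) /\ adj X (a i) (a j) = adj Y (b i) (b j).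
    by move=> lt_ij; move: (Eij (i, j)); rewrite !ffunE /= lt_ij => -[-> ->].
  split=> [i j | i j | i s].
  + case: (ltngtP i j) => [/Elt[] // | /Elt[] | /ord_inj ->]; last by rewrite !eqxx.
    by rewrite eq_sym (eq_sym (b i)).
  + case: (ltngtP i j) => [/Elt[] // | /Elt[] _ | /ord_inj ->].
      by rewrite adj_sym (adj_sym Y).
    by rewrite !adj_irr.
  + by move: (Ecol i) => /ffunP /(_ s); rewrite !ffunE.
- congr pair; apply/ffunP.
  + by move=> [i j]; rewrite !ffunE /=; case: ifP; rewrite ?Eeq ?Eadj.
  + by move=> i; rewrite !ffunE; apply/ffunP => s; rewrite !ffunE.
Qed.

Lemma atp_eq_comp m m' (h : 'I_m' -> 'I_m) (a b : 'I_m -> 'I_n) :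
  atp X a = atp Y b -> atp X (fun i => a (h i)) = atp Y (fun i => b (h i)).
Proof. by move=> /atp_eqP[Eeq Eadj Ecol]; apply/atp_eqP; split=> *. Qed.

End AtomicTypes.

Section Tuples.
Variables (n k : nat).

Lemma snoc_lift (a : 'I_k -> 'I_n) u j : snoc a u (lift ord_max j) = a j.
Proof.
have lt_jk : lift ord_max j < k by rewrite lift_max ltn_ord.
by rewrite /snoc insubT; congr a; apply: val_inj; exact: lift_max.
Qed.

Lemma snoc_max (a : 'I_k -> 'I_n) u : snoc a u ord_max = u.
Proof. by rewrite /snoc insubF //= ltnn. Qed.

Definition last_at (i : 'I_k) (j : 'I_k) : 'I_k.+1 :=
  if j == i then ord_max else lift ord_max j.

Lemma repl_snoc (a : 'I_k -> 'I_n) i u :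
  repl a i u = (fun j => snoc a u (last_at i j)).
Proof.
apply/funext => j; rewrite /repl /last_at.
by case: eqP => _; rewrite ?snoc_max ?snoc_lift.
Qed.

End Tuples.

Section WLEquivalence.
Variables (n l k : nat).
Implicit Types (X Y Z : graph n l) (a b c : 'I_k -> 'I_n).

Lemma wl_same_refl t X a : wl_same t X X a a.
Proof.
elim: t a => [|t IH] a //=; split=> //.
by exists 1%g => u; rewrite perm1; split.
Qed.

Lemma wl_same_sym t X Y a b : wl_same t X Y a b -> wl_same t Y X b a.
Proof.
elim: t a b => [|t IH] a b /=; first by move->.
case=> Wab [sg Hsg]; split; first exact: IH.
exists sg^-1%g => u; have [Eatp Wrepl] := Hsg (sg^-1%g u).
by rewrite permKV in Eatp Wrepl; split=> // i; apply: IH.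
Qed.

Lemma wl_same_trans t X Y Z a b c :
  wl_same t X Y a b -> wl_same t Y Z b c -> wl_same t X Z a c.
Proof.
elim: t a b c => [|t IH] a b c /=; first by move=> -> ->.
case=> Wab [sg1 H1] [Wbc [sg2 H2]]; split; first exact: IH Wab Wbc.
exists (sg1 * sg2)%g => u; rewrite permM.
have [E1 W1] := H1 u; have [E2 W2] := H2 (sg1 u).
by split=> [|i]; [rewrite E1 | apply: IH (W1 i) (W2 i)].
Qed.

Lemma wl_same_atp t X Y a b : wl_same t X Y a b -> atp X a = atp Y b.
Proof. by elim: t => [|t IH] //= [/IH]. Qed.

Lemma wl_same_comp t X Y a b (h : 'I_k -> 'I_k) : injective h ->
  wl_same t X Y a b -> wl_same t X Y (fun i => a (h i)) (fun i => b (h i)).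
Proof.
move=> inj_h; elim: t a b => [|t IH] a b /=; first exact: atp_eq_comp.
case=> Wab [sg Hsg]; split; first exact: IH.
exists sg => u; have [Eatp Wrepl] := Hsg u; split.
- pose h' i := if unlift ord_max i is Some j then lift ord_max (h j) else ord_max.
  have snoc_comp c w : snoc (fun i => c (h i)) w = (fun i => snoc c w (h' i)).
    apply/funext => i; rewrite /h'.
    by case: unliftP => [j ->|->]; rewrite ?snoc_lift ?snoc_max.
  by rewrite !snoc_comp; apply: atp_eq_comp.
- move=> i; have repl_comp c w :
      repl (fun j => c (h j)) i w = (fun j => repl c (h i) w (h j)).
    by apply/funext => j; rewrite /repl (inj_eq inj_h).
  by rewrite !repl_comp; apply: IH.
Qed.

End WLEquivalence.

Lemma upd_eq n (nu : nat -> 'I_n) x v : upd nu x v x = v.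
Proof. by rewrite /upd eqxx. Qed.

Lemma upd_neq n (nu : nat -> 'I_n) x v y : y != x -> upd nu x v y = nu y.
Proof. by rewrite /upd => /negbTE ->. Qed.

Section WLRefinesTL.
Variables (n l : nat) (Om : Type) (ar : Om -> nat).
Variables (fn : forall o, ('I_(ar o) -> R) -> R) (k : nat) (G H : graph n l).
Implicit Types nu mu : nat -> 'I_n.

Definition val_tuple nu : 'I_k.+1 -> 'I_n := fun i => nu i.+1.

Definition val_drop nu (j : 'I_k.+1) : 'I_k -> 'I_n := fun i => nu (lift j i).+1.

Lemma var_index x : 1 <= x <= k.+1 -> exists i : 'I_k.+1, x = i.+1.
Proof. by case: x => // x /andP[_ lt_xk]; exists (Ordinal lt_xk). Qed.

Lemma upd_lift nu (j : 'I_k.+1) i u :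
  upd nu j.+1 u (lift j i).+1 = nu (lift j i).+1.
Proof. by rewrite upd_neq // eqSS eq_sym neq_lift. Qed.

Lemma val_drop_upd nu (j : 'I_k.+1) u :
  val_drop (upd nu j.+1 u) j = val_drop nu j.
Proof. by apply/funext => i; rewrite /val_drop upd_lift. Qed.

Lemma val_tuple_upd nu (j : 'I_k.+1) u :
  val_tuple (upd nu j.+1 u) =
  (fun i => snoc (val_drop nu j) u
              (if unlift j i is Some i' then lift ord_max i' else ord_max)).
Proof.
apply/funext => i; rewrite /val_tuple.
by case: unliftP => [i' ->|->]; rewrite ?snoc_lift ?snoc_max ?upd_eq ?upd_lift.
Qed.

Lemma val_drop_upd_lift (j : 'I_k.+1) (i : 'I_k) :
  exists2 h : 'I_k -> 'I_k, injective h & forall nu u,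
    val_drop (upd nu j.+1 u) (lift j i) =
    (fun m => repl (val_drop nu j) i u (h m)).
Proof.
pose h m := if unlift j (lift (lift j i) m) is Some m' then m' else i.
have hE m : (if h m == i then j else lift j (h m)) = lift (lift j i) m.
  rewrite /h; case: unliftP => [m' Em|->]; last by rewrite eqxx.
  by case: eqP => [Em'|//]; move: (neq_lift (lift j i) m); rewrite Em Em' eqxx.
exists h => [m1 m2 Eh | nu u].
  by apply: (@lift_inj _ (lift j i)); rewrite -!hE Eh.
apply/funext => m; rewrite /val_drop /repl -hE.
by case: (h m == i); rewrite ?upd_eq ?upd_lift.
Qed.

Definition wl_consistent s nu mu : Prop :=
  atp G (val_tuple nu) = atp H (val_tuple mu) /\
  forall j, wl_same s G H (val_drop nu j) (val_drop mu j).

Lemma wl_consistent_upd s nu mu (j : 'I_k.+1) : wl_consistent s.+1 nu mu ->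
  exists sg : {perm 'I_n}, forall u,
    wl_consistent s (upd nu j.+1 u) (upd mu j.+1 (sg u)).
Proof.
case=> _ /(_ j) [Wj [sg Hsg]]; exists sg => u; have [Eatp Wrepl] := Hsg u.
split=> [|j']; first by rewrite !val_tuple_upd; apply: atp_eq_comp.
case: (unliftP j j') => [i ->|->]; last by rewrite !val_drop_upd.
have [h inj_h Eh] := val_drop_upd_lift j i.
by rewrite !Eh; apply: wl_same_comp inj_h (Wrepl i).
Qed.

Lemma eval_wl_consistent e s nu mu :
  vars_among k.+1 e -> sd e <= s -> wl_consistent s nu mu ->
  eval fn G nu e = eval fn H mu e.
Proof.
elim: e s nu mu => [x y|x y|x y|c x|e1 IH1 e2 IH2|e1 IH1 e2 IH2|a e IH|o args IH|
  x e IH] s nu mu /=.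
- case=> /var_index[i ->] /var_index[j ->] _ [/atp_eqP[Eeq _ _] _].
  by move: (Eeq i j); rewrite /val_tuple => ->.
- case=> /var_index[i ->] /var_index[j ->] _ [/atp_eqP[Eeq _ _] _].
  by move: (Eeq i j); rewrite /val_tuple => ->.
- case=> /var_index[i ->] /var_index[j ->] _ [/atp_eqP[_ Eadj _] _].
  by move: (Eadj i j); rewrite /val_tuple => ->.
- case/var_index=> i -> _ [/atp_eqP[_ _ Ecol] _]; exact: Ecol.
- case=> ? ?; rewrite geq_max => /andP[? ?] ?.
  by rewrite (IH1 s nu mu) ?(IH2 s nu mu).
- case=> ? ?; rewrite geq_max => /andP[? ?] ?.
  by rewrite (IH1 s nu mu) ?(IH2 s nu mu).
- by move=> ? ? ?; rewrite (IH s nu mu).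
- move=> Vargs le_sd Cnm; congr (fn _); apply/funext => i.
  by apply: (IH i s) => //; apply: leq_trans le_sd; apply: leq_bigmax.
- case=> /var_index[j ->] Ve; case: s => // s le_sd.
  move/(wl_consistent_upd j) => [sg Csg].
  rewrite [in RHS](reindex_inj (@perm_inj _ sg)).
  by apply: eq_bigr => u _; apply: (IH s).
Qed.

Lemma vwl_same_rho1_TL (hk : 0 < k) t v w :
  vwl_same k t G H v w -> rho1_TL fn k.+1 t G H v w.
Proof.
move=> Wvw e [Ve le_sd] _; apply: (eval_wl_consistent Ve le_sd).
split=> [|j]; last exact: Wvw.
have [_ _ Ecol] := (atp_eqP _ _ _ _).1 (wl_same_atp Wvw).
by apply/atp_eqP; split=> [i j|i j|i c]; rewrite ?eqxx ?adj_irr ?(Ecol (Ordinal hk)).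
Qed.

End WLRefinesTL.

Lemma count_perm_enum (T : finType) (sg : {perm T}) (P : pred T) :
  count (fun u => P (sg u)) (enum T) = count P (enum T).
Proof.
have sg_enum : perm_eq (map sg (enum T)) (enum T).
  apply: uniq_perm; first by rewrite (map_inj_uniq (@perm_inj _ sg)) enum_uniq.
    exact: enum_uniq.
  move=> u; rewrite mem_enum; apply/mapP.
  by exists (sg^-1 u)%g; rewrite ?mem_enum ?permKV.
by rewrite -(seq.permP sg_enum P) [RHS]count_map.
Qed.

Section PermMatching.
Variables (Z : Type) (T : rel Z).
Hypotheses (Trefl : reflexive T) (Tsym : symmetric T) (Ttrans : transitive T).
Variables (n : nat) (f h : 'I_n -> Z).

Lemma perm_matching_count (sg : {perm 'I_n}) : (forall u, T (f u) (h (sg u))) ->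
  forall z, count (fun u => T z (f u)) (enum 'I_n) =
            count (fun u => T z (h u)) (enum 'I_n).
Proof.
move=> Tsg z; rewrite -[RHS](count_perm_enum sg); apply: eq_count => u /=.
apply/idP/idP => Tz; first exact: Ttrans _ _ _ Tz (Tsg u).
by apply: Ttrans _ _ _ Tz _; rewrite Tsym.
Qed.

Lemma count_perm_matching :
  (forall z, count (fun u => T z (f u)) (enum 'I_n) =
             count (fun u => T z (h u)) (enum 'I_n)) ->
  exists sg : {perm 'I_n}, forall u, T (f u) (h (sg u)).
Proof.
(* Replace every value by the position in s of the first value equivalent to it;
   the two sequences of representatives are then permutations of each other. *)
move=> Ecount; pose s := map f (enum 'I_n) ++ map h (enum 'I_n).
pose rep z := find (T z) s.
have repE z1 z2 : has (T z1) s -> has (T z2) s -> (rep z1 == rep z2) = T z1 z2.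
  move=> s1 s2; apply/eqP/idP => [Erep | T12].
  - move: (nth_find z1 s1) (nth_find z1 s2); rewrite -/(rep z1) Erep => T1 T2.
    by apply: Ttrans _ _ _ T1 _; rewrite Tsym.
  - apply: eq_find => z; apply/idP/idP => Tz; last exact: Ttrans _ _ _ T12 Tz.
    by apply: Ttrans _ _ _ _ Tz; rewrite Tsym.
have has_s g : (g = f \/ g = h) -> forall u, has (T (g u)) s.
  move=> Eg u; rewrite has_cat !has_map; apply/orP.
  by case: Eg => ->; [left | right];
    apply/hasP; exists u; rewrite /= ?Trefl -?enumT ?mem_enum.
have count_rep g z : (g = f \/ g = h) -> has (T z) s ->
    count_mem (rep z) [seq rep (g u) | u <- enum 'I_n] =
    count (fun u => T z (g u)) (enum 'I_n).
  move=> Eg z_s; rewrite count_map; apply: eq_count => u /=.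
  by rewrite eq_sym repE ?(has_s _ Eg).
have : perm_eq [tuple rep (f u) | u < n] [tuple rep (h u) | u < n].
  apply/allP => c; rewrite mem_cat => /orP[] /mapP[u _ ->] /=;
    by rewrite !count_rep ?Ecount ?has_s; auto.
case/tuple_permP => sg Esg; exists sg => u.
move: (congr1 (fun t => nth 0 t u) Esg); rewrite !nth_mktuple tnth_mktuple => Eu.
by rewrite -repE ?Eu ?has_s; auto.
Qed.

End PermMatching.

Lemma exists_fresh_var k (p : 'I_k -> nat) :
  exists z, (0 < z <= k.+1) && [forall i, p i != z].
Proof.
have [/allP sub | /allPn[z z_in z_fresh]] := boolP (all (mem (codom p)) (iota 1 k.+1)).
  have := uniq_leq_size (iota_uniq 1 k.+1) sub.
  by rewrite size_iota size_codom card_ord ltnn.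
exists z; move: z_in; rewrite mem_iota add1n => -> /=.
by apply/forallP => i; apply: contraNneq z_fresh => <-; apply: codom_f.
Qed.

Lemma big_indicator_count (T : finType) (P : pred T) :
  \big[Rplus/R0]_(u : T) (if P u then R1 else R0) = INR (count P (enum T)).
Proof.
rewrite enumT [index_enum T]unlock; elim: (Finite.enum T) => [|u s IH].
  by rewrite big_nil.
by rewrite big_cons IH /= plus_INR; case: (P u) => /=; lra.
Qed.

Section TLDefinability.
Variables (n l : nat) (Om : Type) (ar : Om -> nat).
Variables (fn : forall o, ('I_(ar o) -> R) -> R) (k : nat) (G H : graph n l).

Definition gsel (b : bool) : graph n l := if b then G else H.

(* One expression scheme of TL_{k+1}^{(s)} computes F b on the graph gsel b,
   wherever its m arguments are placed: argument i is the variable x_(p i). *)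
Definition definable m s (F : bool -> ('I_m -> 'I_n) -> R) : Prop :=
  exists e : ('I_m -> nat) -> expr l ar,
  forall p : 'I_m -> nat, (forall i, 0 < p i <= k.+1) ->
  [/\ in_TL k.+1 s (e p), forall x, is_free x (e p) -> exists i, x = p i
    & forall b nu, eval fn (gsel b) nu (e p) = F b (fun i => nu (p i))].

Lemma definable_eq m s (i j : 'I_m) :
  definable s (fun _ a => if a i == a j then R1 else R0).
Proof.
exists (fun p => EEq (p i) (p j)) => p p_range.
by split=> // x [->|->]; [exists i | exists j].
Qed.

Lemma definable_adj m s (i j : 'I_m) :
  definable s (fun b a => if adj (gsel b) (a i) (a j) then R1 else R0).
Proof.
exists (fun p => EEdge (p i) (p j)) => p p_range.
by split=> // x [->|->]; [exists i | exists j].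
Qed.

Lemma definable_col m s (i : 'I_m) (c : 'I_l) :
  definable s (fun b a => col (gsel b) (a i) c).
Proof.
exists (fun p => ELab c (p i)) => p p_range.
split=> //; first by split; first exact: p_range.
by move=> x ->; exists i.
Qed.

Lemma definable_const m s (i0 : 'I_m) (r : R) :
  definable s (fun _ (_ : 'I_m -> 'I_n) => r).
Proof.
exists (fun p => EScale r (EEq (p i0) (p i0))) => p p_range.
by split=> // [x [->|->] | b nu /=]; [exists i0 | exists i0 | rewrite eqxx Rmult_1_r].
Qed.

Lemma definable_mul m s (F1 F2 : bool -> ('I_m -> 'I_n) -> R) :
  definable s F1 -> definable s F2 ->
  definable s (fun b a => Rmult (F1 b a) (F2 b a)).
Proof.
move=> [e1 He1] [e2 He2]; exists (fun p => EMul (e1 p) (e2 p)) => p p_range.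
have [[V1 S1] Fr1 E1] := He1 p p_range; have [[V2 S2] Fr2 E2] := He2 p p_range.
split=> [|x [/Fr1|/Fr2] //|b nu /=]; last by rewrite E1 E2.
by split; [split | rewrite /= geq_max S1 S2].
Qed.

Lemma definable_add m s (F1 F2 : bool -> ('I_m -> 'I_n) -> R) :
  definable s F1 -> definable s F2 ->
  definable s (fun b a => Rplus (F1 b a) (F2 b a)).
Proof.
move=> [e1 He1] [e2 He2]; exists (fun p => EAdd (e1 p) (e2 p)) => p p_range.
have [[V1 S1] Fr1 E1] := He1 p p_range; have [[V2 S2] Fr2 E2] := He2 p p_range.
split=> [|x [/Fr1|/Fr2] //|b nu /=]; last by rewrite E1 E2.
by split; [split | rewrite /= geq_max S1 S2].
Qed.

Lemma definable_scale m s (c : R) (F : bool -> ('I_m -> 'I_n) -> R) :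
  definable s F -> definable s (fun b a => Rmult c (F b a)).
Proof.
move=> [e He]; exists (fun p => EScale c (e p)) => p p_range.
by have [Ve Fre Ee] := He p p_range; split=> // b nu /=; rewrite Ee.
Qed.

Lemma definable_affine m s (i0 : 'I_m) (c1 c0 : R) (F : bool -> ('I_m -> 'I_n) -> R) :
  definable s F -> definable s (fun b a => Rplus (Rmult c1 (F b a)) c0).
Proof.
by move=> dF; apply: definable_add (definable_const s i0 c0); apply: definable_scale.
Qed.

Lemma definable_mono m s s' (F : bool -> ('I_m -> 'I_n) -> R) :
  s <= s' -> definable s F -> definable s' F.
Proof.
move=> le_s [e He]; exists e => p p_range.
have [[Ve Se] Fre Ee] := He p p_range.
by split=> //; split=> //; apply: leq_trans le_s.
Qed.

Lemma definable_ext m s (F F' : bool -> ('I_m -> 'I_n) -> R) :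
  definable s F -> (forall b a, F b a = F' b a) -> definable s F'.
Proof.
move=> [e He] EF; exists e => p p_range.
by have [Ve Fre Ee] := He p p_range; split=> // b nu; rewrite -EF.
Qed.

Lemma definable_comp m m' s (h : 'I_m' -> 'I_m)
    (F : bool -> ('I_m' -> 'I_n) -> R) :
  definable s F -> definable s (fun b a => F b (fun i => a (h i))).
Proof.
move=> [e He]; exists (fun p => e (fun i => p (h i))) => p p_range.
have [Ve Fre Ee] := He _ (fun i => p_range (h i)).
by split=> // x /Fre[i ->]; exists (h i).
Qed.

Lemma definable_sum s (F : bool -> ('I_k.+1 -> 'I_n) -> R) : definable s F ->
  definable s.+1 (fun b a => \big[Rplus/R0]_(u < n) F b (snoc a u)).
Proof.
(* The summation variable x_(z p) is one not carrying an argument. *)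
move=> [e He]; pose z (p : 'I_k -> nat) := xchoose (exists_fresh_var p).
pose p' (p : 'I_k -> nat) (i : 'I_k.+1) :=
  if unlift ord_max i is Some j then p j else z p.
exists (fun p => ESum (z p) (e (p' p))) => p p_range.
have /andP[z_range /forallP z_fresh] := xchooseP (exists_fresh_var p).
have p'_range i : 0 < p' p i <= k.+1 by rewrite /p'; case: unliftP.
have [[Ve Se] Fre Ee] := He _ p'_range.
split=> [|x /= [x_z /Fre[i Ex]]|b nu /=]; first by split.
- by move: x_z; rewrite Ex /p'; case: unliftP => [j _ _|_ /(_ erefl) []]; exists j.
- apply: eq_bigr => u _; rewrite Ee; congr F; apply/funext => i.
  rewrite /p'; case: unliftP => [j ->|->];
    by rewrite ?snoc_lift ?snoc_max ?upd_eq ?upd_neq.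
Qed.

Definition indicator_definable m s (P : bool -> ('I_m -> 'I_n) -> Prop) : Prop :=
  exists2 F, definable s F & forall b a, F b a = if `[< P b a >] then R1 else R0.

Lemma indicator_iff m s (P Q : bool -> ('I_m -> 'I_n) -> Prop) :
  (forall b a, P b a <-> Q b a) -> indicator_definable s P -> indicator_definable s Q.
Proof.
by move=> PQ [F dF FP]; exists F => // b a; rewrite FP (asbool_equiv_eq (PQ b a)).
Qed.

Lemma indicator_and m s (P Q : bool -> ('I_m -> 'I_n) -> Prop) :
  indicator_definable s P -> indicator_definable s Q ->
  indicator_definable s (fun b a => P b a /\ Q b a).
Proof.
move=> [F1 dF1 F1P] [F2 dF2 F2Q]; exists (fun b a => Rmult (F1 b a) (F2 b a)).
  exact: definable_mul.
move=> b a; rewrite F1P F2Q asbool_and.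
by case: `[< P b a >]; case: `[< Q b a >] => /=; lra.
Qed.

Lemma indicator_mono m s s' (P : bool -> ('I_m -> 'I_n) -> Prop) :
  s <= s' -> indicator_definable s P -> indicator_definable s' P.
Proof. by move=> le_s [F dF FP]; exists F => //; apply: definable_mono dF. Qed.

Lemma indicator_comp m m' s (h : 'I_m' -> 'I_m)
    (P : bool -> ('I_m' -> 'I_n) -> Prop) :
  indicator_definable s P ->
  indicator_definable s (fun b a => P b (fun i => a (h i))).
Proof.
move=> [F dF FP]; exists (fun b a => F b (fun i => a (h i))) => //.
exact: definable_comp.
Qed.

Lemma indicator_forall m s (i0 : 'I_m) (T : finType)
    (P : T -> bool -> ('I_m -> 'I_n) -> Prop) :
  (forall x, indicator_definable s (P x)) ->
  indicator_definable s (fun b a => forall x, P x b a).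
Proof.
move=> dP; suff /(_ (enum T)) : forall xs : seq T,
    indicator_definable s (fun b a => forall x, x \in xs -> P x b a).
  by apply: indicator_iff => b a; split=> Pba x; [apply: Pba; rewrite mem_enum |].
elim=> [|y xs IH].
  exists (fun _ _ => R1) => [|b a]; first exact: definable_const s i0 R1.
  by rewrite asboolT.
apply: indicator_iff (indicator_and (dP y) IH) => b a; split.
- by move=> [Py Pxs] x; rewrite in_cons => /predU1P[-> //|]; apply: Pxs.
- by move=> Pall; split=> [|x xs_x]; apply: Pall; rewrite in_cons ?eqxx ?xs_x ?orbT.
Qed.

Lemma indicator_value m s (i0 : 'I_m) (T : finType) (V : T -> R) r
    (F : bool -> ('I_m -> 'I_n) -> R) :
  definable s F -> (forall b a, exists x, F b a = V x) ->
  indicator_definable s (fun b a => r = F b a).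
Proof.
move=> dF F_range.
suff [F' dF' F'E] : exists2 F', definable s F' & forall b a,
    (r = F b a -> F' b a = R1) /\
    (forall x, x \in enum T -> F b a = V x -> r <> F b a -> F' b a = R0).
  exists F' => // b a; have [F'1 F'0] := F'E b a; case: asboolP => [/F'1 // | rF].
  by have [x Fx] := F_range b a; apply: F'0 Fx rF; rewrite mem_enum.
elim: (enum T) => [|y xs [F' dF' F'E]].
  by exists (fun _ _ => R1); first exact: definable_const s i0 R1.
have [Vy_r | Vy_r] := Req_EM_T (V y) r.
  exists F' => // b a; have [F'1 F'0] := F'E b a; split=> // x.
  by rewrite in_cons => /predU1P[-> Fy rF | /F'0]; first by rewrite Fy Vy_r in rF.
(* Lagrange interpolation: the new factor is 1 at the value r and 0 at V y. *)
exists (fun b a =>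
  Rmult (F' b a) (Rplus (Rmult (/ (r - V y)) (F b a)) (- V y / (r - V y)))).
  by apply: definable_mul dF' _; apply: definable_affine.
move=> b a; have [F'1 F'0] := F'E b a; split=> [rF | x].
  by rewrite F'1 // -rF; field; lra.
rewrite in_cons => /predU1P[-> Fy _ | xs_x Fx rF]; last by rewrite (F'0 x) ?Rmult_0_l.
by rewrite Fy; field; lra.
Qed.

Lemma indicator_bool m s (i0 : 'I_m) (c : bool -> ('I_m -> 'I_n) -> bool)
    (c0 : bool) :
  definable s (fun b a => if c b a then R1 else R0) ->
  indicator_definable s (fun b a => c0 = c b a).
Proof.
move=> dc; have := indicator_value i0 (V := fun x : bool => if x then R1 else R0)
  (if c0 then R1 else R0) dc (fun b a => ex_intro _ (c b a) erefl).
apply: indicator_iff => b a; split; last by move->.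
by case: c0 (c b a) => -[] //= E; exfalso; apply: R1_neq_R0; lra.
Qed.

Lemma indicator_atp m s (i0 : 'I_m) x (a : 'I_m -> 'I_n) :
  indicator_definable s (fun b c => atp (gsel x) a = atp (gsel b) c).
Proof.
apply: (@indicator_iff _ _ (fun b c =>
    (forall i j, (a i == a j) = (c i == c j)) /\
    (forall i j, adj (gsel x) (a i) (a j) = adj (gsel b) (c i) (c j)) /\
    (forall i t, col (gsel x) (a i) t = col (gsel b) (c i) t))).
  by move=> b c; rewrite atp_eqP; split=> [[E1 [E2 E3]] | [E1 E2 E3]].
apply: indicator_and; [|apply: indicator_and];
  apply: (indicator_forall i0) => i; apply: (indicator_forall i0) => j.
- exact/(indicator_bool i0)/definable_eq.
- exact/(indicator_bool i0)/definable_adj.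
- apply: (indicator_value i0 (V := fun y : bool * 'I_n => col (gsel y.1) y.2 j)).
    exact: definable_col.
  by move=> b c; exists (b, c i).
Qed.

(* Equality of the labels (atp_{k+1}(v, u), wl_k^{(s)}(v[u/1]), ..., wl_k^{(s)}(v[u/k]))
   of two extended tuples (v, u). *)
Definition ext_equiv s (y z : bool * ('I_k.+1 -> 'I_n)) : Prop :=
  atp (gsel y.1) y.2 = atp (gsel z.1) z.2 /\
  forall i, wl_same s (gsel y.1) (gsel z.1)
                      (fun j => y.2 (last_at i j)) (fun j => z.2 (last_at i j)).

Definition ext_count s y b (a : 'I_k -> 'I_n) : nat :=
  count (fun u => `[< ext_equiv s y (b, snoc a u) >]) (enum 'I_n).

(* z ranges over finite functions so that the quantifier is a finite conjunction. *)
Lemma wl_sameS s x y (a c : 'I_k -> 'I_n) :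
  wl_same s.+1 (gsel x) (gsel y) a c <->
  wl_same s (gsel x) (gsel y) a c /\
  forall z : bool * {ffun 'I_k.+1 -> 'I_n},
    ext_count s (z.1, z.2 : _ -> _) x a = ext_count s (z.1, z.2 : _ -> _) y c.
Proof.
pose T y z := `[< ext_equiv s y z >].
have Trefl : reflexive T by move=> z; apply/asboolP; split=> // i; apply: wl_same_refl.
have Tsym : symmetric T.
  by move=> y1 y2; apply/asboolP/asboolP => -[E W]; split=> [|i];
    rewrite ?E //; apply: wl_same_sym.
have Ttrans : transitive T.
  move=> y2 y1 y3 /asboolP[E12 W12] /asboolP[E23 W23]; apply/asboolP.
  by split=> [|i]; [rewrite E12 | apply: wl_same_trans (W12 i) (W23 i)].
split=> -[Wac Hac]; split=> //.
- move=> z; have [sg Hsg] := Hac.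
  apply: (perm_matching_count Tsym Ttrans (sg := sg)) => u.
  by have [E W] := Hsg u; apply/asboolP; split=> // i; move: (W i); rewrite !repl_snoc.
- have /(count_perm_matching Trefl Tsym Ttrans)[sg Hsg] :
      forall z, ext_count s z x a = ext_count s z y c.
    move=> [g d]; have /= := Hac (g, [ffun i => d i]).
    by rewrite (funext (ffunE d)).
  exists sg => u; have /asboolP[E W] := Hsg u.
  by split=> // i; rewrite !repl_snoc; apply: W.
Qed.

Lemma indicator_ext_equiv s z :
  (forall x (a : 'I_k -> 'I_n),
     indicator_definable s (fun b c => wl_same s (gsel x) (gsel b) a c)) ->
  indicator_definable s (fun b c => ext_equiv s z (b, c)).
Proof.
move=> dW; apply: indicator_and; first exact: (indicator_atp s ord_max).
apply: (indicator_forall ord_max) => i.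
exact: (indicator_comp (last_at i) (dW z.1 (fun j => z.2 (last_at i j)))).
Qed.

Lemma definable_ext_count s z :
  indicator_definable s (fun b c => ext_equiv s z (b, c)) ->
  definable s.+1 (fun b a => INR (ext_count s z b a)).
Proof.
move=> [F dF FE]; apply: (definable_ext (definable_sum dF)) => b a.
by rewrite (eq_bigr _ (fun u _ => FE b (snoc a u))) big_indicator_count.
Qed.

Lemma indicator_ext_count s (i0 : 'I_k) z x (a : 'I_k -> 'I_n) :
  definable s.+1 (fun b c => INR (ext_count s z b c)) ->
  indicator_definable s.+1 (fun b c => ext_count s z x a = ext_count s z b c).
Proof.
move=> dN; apply: (@indicator_iff _ _
    (fun b c => INR (ext_count s z x a) = INR (ext_count s z b c))).
  by move=> b c; split=> [/INR_eq | ->].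
apply: (indicator_value i0 (V := fun i : 'I_n.+1 => INR i)) dN _ => b c.
have lt_count : ext_count s z b c < n.+1.
  by rewrite ltnS -[n in _ <= n]size_enum_ord count_size.
by exists (Ordinal lt_count).
Qed.

Lemma indicator_wl_same (i0 : 'I_k) s x (a : 'I_k -> 'I_n) :
  indicator_definable s (fun b c => wl_same s (gsel x) (gsel b) a c).
Proof.
elim: s x a => [|s IH] x a; first exact: indicator_atp.
apply: indicator_iff (fun b c => iff_sym (wl_sameS s x b a c)) _.
apply: indicator_and; first exact: indicator_mono (leqnSn s) (IH x a).
apply: (indicator_forall i0) => z.
exact/(indicator_ext_count i0)/definable_ext_count/indicator_ext_equiv.
Qed.

Lemma rho1_TL_vwl_same (hk : 0 < k) t v w :
  rho1_TL fn k.+1 t G H v w -> vwl_same k t G H v w.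
Proof.
move=> Hrho.
have [F [e He] FE] := indicator_wl_same (Ordinal hk) t true (fun _ => v).
(* The tuple (v, ..., v) is represented by placing every argument on x_1. *)
have [Ve Fre Ee] := He (fun _ => 1) (fun _ => erefl).
have Free1 : free_among 1 (e (fun _ => 1)) by move=> x /Fre[_ ->].
move: (Hrho _ Ve Free1); rewrite (Ee true) (Ee false) !FE /=.
case: asboolP => [_ | /(_ (wl_same_refl t G _))] //.
by case: asboolP => // _ /R1_neq_R0.
Qed.

End TLDefinability.

Theorem theorem2 (n l : nat) (hn : 0 < n) (hl : 0 < l)
    (Om : Type) (ar : Om -> nat) (fn : forall o : Om, ('I_(ar o) -> R) -> R)
    (t k : nat) (hk : 0 < k) (G H : graph n l) (v w : 'I_n) :
  vwl_same k t G H v w <-> rho1_TL fn k.+1 t G H v w.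
Proof. by split; [apply: vwl_same_rho1_TL | apply: rho1_TL_vwl_same]. Qed.
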